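(* Let $\|\cdot\|$ be a norm on $\mathbb{R}^2$ with unit sphere $S=\{x\in\mathbb{R}^2:\|x\|=1\}$. The following are equivalent: (i) $\|\cdot\|$ is not a URTC-norm; (ii) there exist $c,d\in S$ with $\|c-d\|>1$ such that the segment $[c,d]=\{c+t(d-c):0\le t\le 1\}$ is contained in $S$. In particular, every strictly convex norm on $\mathbb{R}^2$ is a URTC-norm.
   Context: A norm $\|\cdot\|$ on $\mathbb{R}^2$ is called a URTC-norm if for every $a,b\in\mathbb{R}^2$ with $\|a-b\|=1$ the system $\|a-x\|=1$, $\|b-x\|=1$ is satisfied by exactly two points $x\in\mathbb{R}^2$. A norm is strictly convex if its unit sphere contains no non-degenerate line segment. *)

From Stdlib Require Import Reals.
Open Scope R_scope.

Definition pt := (R * R)%type.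
Definition padd (x y : pt) : pt := (fst x + fst y, snd x + snd y).
Definition psub (x y : pt) : pt := (fst x - fst y, snd x - snd y).
Definition pscale (t : R) (x : pt) : pt := (t * fst x, t * snd x).
Definition pzero : pt := (0, 0).

Record is_norm (N : pt -> R) : Prop := {
  norm_nonneg : forall x, 0 <= N x;
  norm_definite : forall x, N x = 0 -> x = pzero;
  norm_homog : forall (t : R) x, N (pscale t x) = Rabs t * N x;
  norm_triangle : forall x y, N (padd x y) <= N x + N y
}.

Definition unit_sphere (N : pt -> R) (x : pt) : Prop := N x = 1.

Definition URTC (N : pt -> R) : Prop :=
  forall a b : pt, N (psub a b) = 1 ->
    exists x1 x2 : pt, x1 <> x2 /\
      forall x : pt, (N (psub a x) = 1 /\ N (psub b x) = 1) <-> (x = x1 \/ x = x2).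

Definition segment (c d : pt) (x : pt) : Prop :=
  exists t : R, 0 <= t <= 1 /\ x = padd c (pscale t (psub d c)).

Definition strictly_convex (N : pt -> R) : Prop :=
  forall c d : pt, c <> d -> ~ (forall x, segment c d x -> unit_sphere N x).

From Stdlib Require Import Reals Lra Psatz Classical.
Open Scope R_scope.

(* Put u = a - b.  The solutions x of the system are b + y for the points y
   with ||y|| = ||u - y|| = 1, and y |-> u - y permutes these points while
   swapping the two sides of the line R u.  On each closed side there is at
   most one of them unless the sphere contains a segment of length > 1: two
   at the same height det(u, y) give four unit points on a line parallel to
   u spanning a length > 1, and two at different heights contradict the
   convexity of r |-> ||A + r u|| for a suitable A in the open ball.  A path
   from u to -u and the intermediate value theorem give one solution strictly
   on each side.  Conversely, a segment [c, d] of S of length l > 1 gives the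
   infinitely many solutions c + s (d - c), 1/l <= s <= 1, for u = (d - c)/l
   and b = 0. *)

Lemma pt_ext (p q : pt) : fst p = fst q -> snd p = snd q -> p = q.
Proof. destruct p, q; simpl; intros; subst; reflexivity. Qed.

Ltac pt_ring := apply pt_ext; simpl; ring.

Definition line (p w : pt) (r : R) : pt := padd p (pscale r w).

Definition det (u w : pt) : R := fst u * snd w - snd u * fst w.

Lemma line_inj p w r r' : w <> pzero -> line p w r = line p w r' -> r = r'.
Proof.
  intros Hw E. destruct (Req_dec r r') as [|Hr]; [assumption|].
  exfalso; apply Hw.
  pose proof (f_equal fst E) as E1; pose proof (f_equal snd E) as E2; simpl in E1, E2.
  apply pt_ext; simpl; apply (Rmult_eq_reg_l (r - r')); lra.
Qed.

Lemma sqnorm_pos u : u <> pzero -> 0 < fst u * fst u + snd u * snd u.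
Proof.
  destruct u as [a b]; simpl; intro Hu.
  destruct (Req_dec a 0); [destruct (Req_dec b 0)|].
  - subst; now contradict Hu.
  - assert (0 < b * b) by (apply Rsqr_pos_lt; assumption). nra.
  - assert (0 < a * a) by (apply Rsqr_pos_lt; assumption). nra.
Qed.

Lemma det_eq_line u y z : u <> pzero -> det u y = det u z ->
  exists s, y = line z u s.
Proof.
  destruct u as [a b], y as [y1 y2], z as [z1 z2]; unfold det, line; simpl.
  intros Hu Hd.
  pose proof (sqnorm_pos (a, b) Hu) as Hab; simpl in Hab.
  pose proof (f_equal (Rmult a) Hd); pose proof (f_equal (Rmult b) Hd).
  exists ((a * (y1 - z1) + b * (y2 - z2)) / (a * a + b * b)).
  apply pt_ext; simpl; field_simplify_eq; lra.
Qed.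

Section PlaneNorm.

Variable N : pt -> R.
Hypothesis HN : is_norm N.

Lemma norm_pzero : N pzero = 0.
Proof.
  replace pzero with (pscale 0 pzero) by pt_ring.
  rewrite (norm_homog _ HN), Rabs_R0; ring.
Qed.

Lemma norm1_neq0 x : N x = 1 -> x <> pzero.
Proof. intros Hx ->; rewrite norm_pzero in Hx; lra. Qed.

Lemma norm_opp x : N (pscale (-1) x) = N x.
Proof. rewrite (norm_homog _ HN), Rabs_left1 by lra; ring. Qed.

Lemma norm_psubC p q : N (psub p q) = N (psub q p).
Proof.
  replace (psub q p) with (pscale (-1) (psub p q)) by pt_ring.
  now rewrite norm_opp.
Qed.

Lemma norm_line_convex p w l m h : l < h -> l <= m <= h ->
  (h - l) * N (line p w m) <= (h - m) * N (line p w l) + (m - l) * N (line p w h).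
Proof.
  intros Hlh Hm.
  assert (E : pscale (h - l) (line p w m)
            = padd (pscale (h - m) (line p w l)) (pscale (m - l) (line p w h)))
    by (unfold line; pt_ring).
  pose proof (norm_triangle _ HN (pscale (h - m) (line p w l)) (pscale (m - l) (line p w h))) as T.
  rewrite <- E, !(norm_homog _ HN), !Rabs_right in T by lra.
  exact T.
Qed.

Lemma line_lt1_l p w l m h : l <= m < h ->
  N (line p w l) < 1 -> N (line p w h) <= 1 -> N (line p w m) < 1.
Proof.
  intros Hm Hl Hh. destruct (Req_dec l m) as [<-|Hlm]; [assumption|].
  pose proof (norm_line_convex p w l m h ltac:(lra) ltac:(lra)). nra.
Qed.

Lemma line_lt1_r p w l m h : l < m <= h ->
  N (line p w l) <= 1 -> N (line p w h) < 1 -> N (line p w m) < 1.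
Proof.
  intros Hm Hl Hh. destruct (Req_dec m h) as [->|Hmh]; [assumption|].
  pose proof (norm_line_convex p w l m h ltac:(lra) ltac:(lra)). nra.
Qed.

Lemma line_eq1_between p w l m h : l < m < h ->
  N (line p w l) = 1 -> N (line p w m) = 1 -> N (line p w h) = 1 ->
  forall r, l <= r <= h -> N (line p w r) = 1.
Proof.
  intros Hm Hl HM Hh r Hr.
  pose proof (norm_line_convex p w l r h ltac:(lra) Hr) as Up.
  rewrite Hl, Hh in Up.
  destruct (Rlt_le_dec r m) as [Hrm|Hmr].
  - pose proof (norm_line_convex p w r m h ltac:(lra) ltac:(lra)) as Lo.
    rewrite HM, Hh in Lo. nra.
  - destruct (Req_dec r m) as [->|Hrm]; [assumption|].
    pose proof (norm_line_convex p w l m r ltac:(lra) ltac:(lra)) as Lo.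
    rewrite HM, Hl in Lo. nra.
Qed.

Lemma line_no_unit_chord p w t :
  N (line p w (-1)) < 1 -> N (line p w 0) < 1 ->
  N (line p w (t - 1)) = 1 -> N (line p w t) = 1 -> False.
Proof.
  intros Hm1 H0 Ht1 Ht.
  destruct (Rlt_le_dec t (-1)) as [H1|H1]; [|destruct (Rlt_le_dec t 0) as [H2|H2];
    [|destruct (Rlt_le_dec t 1) as [H3|H3]]].
  - pose proof (line_lt1_r p w (t - 1) t (-1) ltac:(lra) ltac:(lra) Hm1). lra.
  - pose proof (line_lt1_l p w (-1) t 0 ltac:(lra) Hm1 ltac:(lra)). lra.
  - pose proof (line_lt1_l p w (-1) (t - 1) 0 ltac:(lra) Hm1 ltac:(lra)). lra.
  - pose proof (line_lt1_l p w 0 (t - 1) t ltac:(lra) H0 ltac:(lra)). lra.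
Qed.

Definition long_segment_in_sphere : Prop :=
  exists c d : pt, unit_sphere N c /\ unit_sphere N d /\ N (psub c d) > 1 /\
    (forall x, segment c d x -> unit_sphere N x).

Lemma long_segment_of_three p w l m h : l < m < h ->
  N (line p w l) = 1 -> N (line p w m) = 1 -> N (line p w h) = 1 ->
  (h - l) * N w > 1 -> long_segment_in_sphere.
Proof.
  intros Hm Hl HM Hh Hw.
  exists (line p w l), (line p w h); unfold unit_sphere; repeat split; auto.
  - replace (psub (line p w l) (line p w h)) with (pscale (l - h) w) by (unfold line; pt_ring).
    rewrite (norm_homog _ HN), Rabs_left1 by lra. lra.
  - intros x [t [Ht ->]].
    replace (padd (line p w l) (pscale t (psub (line p w h) (line p w l))))
      with (line p w (l + t * (h - l))) by (unfold line; pt_ring).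
    apply (line_eq1_between p w l m h); auto. nra.
Qed.

Definition apex (u y : pt) : Prop := N y = 1 /\ N (psub u y) = 1.

Lemma apex_reflect u y : apex u y -> apex u (psub u y).
Proof.
  intros [H1 H2]; split; [assumption|].
  now replace (psub u (psub u y)) with y by pt_ring.
Qed.

Lemma apex_det_eq u y z : N u = 1 -> apex u y -> apex u z -> y <> z ->
  det u y = det u z -> long_segment_in_sphere.
Proof.
  intros Hu [Hy Hy'] [Hz Hz'] Hyz Hd.
  destruct (det_eq_line u y z (norm1_neq0 u Hu) Hd) as [s ->].
  assert (Hs : s <> 0) by (intros ->; apply Hyz; unfold line; pt_ring).
  assert (Lm1 : N (line z u (-1)) = 1).
  { replace (line z u (-1)) with (psub z u) by (unfold line; pt_ring).
    now rewrite norm_psubC. }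
  assert (L0 : N (line z u 0) = 1)
    by (now replace (line z u 0) with z by (unfold line; pt_ring)).
  assert (Ls1 : N (line z u (s - 1)) = 1).
  { replace (line z u (s - 1)) with (psub (line z u s) u) by (unfold line; pt_ring).
    now rewrite norm_psubC. }
  destruct (Rlt_or_le 0 s).
  - apply (long_segment_of_three z u (-1) 0 s); auto; try rewrite Hu; lra.
  - apply (long_segment_of_three z u (s - 1) (-1) 0); auto; try rewrite Hu; lra.
Qed.

(* The point A lies on [y, u/2] and has the height of z; both A and A - u lie
   in the open unit ball, which is incompatible with z = A + t u and
   z - u = A + (t - 1) u lying on the sphere. *)
Lemma apex_det_lt u y z : N u = 1 -> apex u y -> apex u z ->
  0 <= det u z < det u y -> False.
Proof.
  intros Hu [Hy Hy'] [Hz Hz'] [Hc Hcb].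
  set (b := det u y) in *; set (c := det u z) in *.
  set (la := (b - c) / (2 * b)).
  assert (Hla : 0 < la <= 1 / 2).
  { unfold la; split; [apply Rdiv_lt_0_compat; lra|].
    apply Rmult_le_reg_r with (2 * b); [lra|].
    unfold Rdiv; rewrite Rmult_assoc, Rinv_l by lra; lra. }
  set (w := psub u (pscale 2 y)).
  set (A := line y w la).
  assert (HA : N (line A u 0) < 1).
  { replace (line A u 0) with (line y w la) by (unfold A, line; pt_ring).
    apply (line_lt1_r y w 0 la (1 / 2)); [lra| |].
    - replace (line y w 0) with y by (unfold line; pt_ring). lra.
    - replace (line y w (1 / 2)) with (pscale (1 / 2) u)
        by (unfold line, w; apply pt_ext; simpl; field).
      rewrite (norm_homog _ HN), Rabs_right, Hu by lra. lra. }
  assert (HAu : N (line A u (-1)) < 1).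
  { replace (line A u (-1)) with (line (psub y u) w la) by (unfold A, line; pt_ring).
    apply (line_lt1_r (psub y u) w 0 la (1 / 2)); [lra| |].
    - replace (line (psub y u) w 0) with (psub y u) by (unfold line; pt_ring).
      rewrite norm_psubC. lra.
    - replace (line (psub y u) w (1 / 2)) with (pscale (- (1 / 2)) u)
        by (unfold line, w; apply pt_ext; simpl; field).
      rewrite (norm_homog _ HN), Rabs_Ropp, Rabs_right, Hu by lra. lra. }
  assert (HdA : det u z = det u A).
  { fold c; unfold A, w, line, det, la; simpl; fold (det u y) b.
    field_simplify_eq; [|lra]. unfold b, det; ring. }
  destruct (det_eq_line u z A (norm1_neq0 u Hu) HdA) as [t Ht].
  apply (line_no_unit_chord A u t HAu HA).
  - replace (line A u (t - 1)) with (psub z u) by (rewrite Ht; unfold line; pt_ring).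
    now rewrite norm_psubC.
  - now rewrite <- Ht.
Qed.

Lemma apex_upper_unique u y z : N u = 1 -> ~ long_segment_in_sphere ->
  apex u y -> apex u z -> 0 <= det u y -> 0 <= det u z -> y = z.
Proof.
  intros Hu NL Ay Az Hy Hz.
  destruct (classic (y = z)) as [|Hyz]; [assumption|exfalso].
  destruct (Rtotal_order (det u y) (det u z)) as [Hlt|[Heq|Hgt]].
  - apply (apex_det_lt u z y); auto.
  - apply NL, (apex_det_eq u y z); auto.
  - apply (apex_det_lt u y z); auto.
Qed.

Lemma apex_lower_unique u y z : N u = 1 -> ~ long_segment_in_sphere ->
  apex u y -> apex u z -> det u y <= 0 -> det u z <= 0 -> y = z.
Proof.
  intros Hu NL Ay Az Hy Hz.
  assert (E : psub u y = psub u z).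
  { apply (apex_upper_unique u); auto using apex_reflect;
      unfold det in *; simpl; lra. }
  replace y with (psub u (psub u y)) by pt_ring.
  rewrite E; pt_ring.
Qed.

Lemma norm_sub_le p q :
  N p - N q <= Rabs (fst p - fst q) * N (1, 0) + Rabs (snd p - snd q) * N (0, 1).
Proof.
  set (d1 := pscale (fst p - fst q) (1, 0)); set (d2 := pscale (snd p - snd q) (0, 1)).
  replace p with (padd q (padd d1 d2)) at 1 by (unfold d1, d2; pt_ring).
  pose proof (norm_triangle _ HN q (padd d1 d2)).
  pose proof (norm_triangle _ HN d1 d2).
  unfold d1, d2 in *; rewrite !(norm_homog _ HN) in *. lra.
Qed.

Lemma continuity_norm (g : R -> pt) :
  continuity (fun t => fst (g t)) -> continuity (fun t => snd (g t)) ->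
  continuity (fun t => N (g t)).
Proof.
  intros C1 C2 x eps Heps; simpl; unfold R_dist.
  set (K := N (1, 0) + N (0, 1) + 1).
  pose proof (norm_nonneg _ HN (1, 0)); pose proof (norm_nonneg _ HN (0, 1)).
  assert (He : eps / K > 0) by (apply Rdiv_lt_0_compat; unfold K; lra).
  destruct (C1 x (eps / K) He) as [a1 [Ha1 P1]].
  destruct (C2 x (eps / K) He) as [a2 [Ha2 P2]].
  exists (Rmin a1 a2); split; [now apply Rmin_pos|].
  intros y [Dy Hy]; simpl in *; unfold R_dist in *.
  assert (Q1 : Rabs (fst (g y) - fst (g x)) < eps / K)
    by (apply P1; split; auto; eapply Rlt_le_trans; [exact Hy|apply Rmin_l]).
  assert (Q2 : Rabs (snd (g y) - snd (g x)) < eps / K)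
    by (apply P2; split; auto; eapply Rlt_le_trans; [exact Hy|apply Rmin_r]).
  pose proof (norm_sub_le (g y) (g x)) as L1.
  pose proof (norm_sub_le (g x) (g y)) as L2.
  rewrite (Rabs_minus_sym (fst (g x))), (Rabs_minus_sym (snd (g x))) in L2.
  assert (E : K * (eps / K) = eps) by (field; unfold K; lra).
  pose proof (Rabs_pos (fst (g y) - fst (g x))); pose proof (Rabs_pos (snd (g y) - snd (g x))).
  apply Rabs_def1; unfold K in *; nra.
Qed.

Definition turn (e : R) (u : pt) (t : R) : pt :=
  padd (pscale (1 - 2 * t) u) (pscale (e * (t * (1 - t))) (- snd u, fst u)).

Lemma det_turn e u t :
  det u (turn e u t) = e * (t * (1 - t)) * (fst u * fst u + snd u * snd u).
Proof. unfold det, turn; simpl; ring. Qed.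

Lemma turn_neq0 e u t : u <> pzero -> e * e = 1 -> turn e u t <> pzero.
Proof.
  intros Hu He E. pose proof (sqnorm_pos u Hu) as Hab.
  destruct u as [a b]; unfold turn, pzero in E; simpl in Hab, E.
  pose proof (f_equal fst E) as E1; pose proof (f_equal snd E) as E2; simpl in E1, E2.
  assert (Hsq : ((1 - 2 * t) ^ 2 + (t * (1 - t)) ^ 2) * (a * a + b * b) = 0).
  { transitivity (((1 - 2 * t) * a + e * (t * (1 - t)) * - b) ^ 2
                + ((1 - 2 * t) * b + e * (t * (1 - t)) * a) ^ 2).
    - rewrite <- (Rmult_1_l ((t * (1 - t)) ^ 2)), <- He. ring.
    - rewrite E1, E2; ring. }
  apply Rmult_integral in Hsq as [Hsq|]; [|lra].
  pose proof (pow2_ge_0 (1 - 2 * t)); pose proof (pow2_ge_0 (t * (1 - t))).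
  assert (Ht : (1 - 2 * t) * (1 - 2 * t) = 0) by lra.
  apply Rmult_integral in Ht as [Ht|Ht];
    replace t with (1 / 2) in Hsq by lra; lra.
Qed.

(* The intermediate value theorem applied to ||N(w) u - w|| - N(w) along
   w = turn e u t yields an apex w / N(w); the factor N(w) keeps the function
   continuous without dividing by N(w). *)
Lemma apex_on_side u e : N u = 1 -> e * e = 1 ->
  exists y, apex u y /\ e * det u y > 0.
Proof.
  intros Hu He.
  set (w := turn e u).
  set (g := fun t => N (psub (pscale (N (w t)) u) (w t)) - N (w t)).
  assert (Cw : continuity (fun t => N (w t)))
    by (apply continuity_norm; unfold w, turn; simpl; intro; reg).
  assert (Cg : continuity g).
  { apply continuity_minus; [|exact Cw].
    apply continuity_norm; simpl; intro x; apply continuity_pt_minus;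
      try (apply continuity_pt_mult; [apply Cw|apply continuity_pt_const; now intros ? ?]);
      unfold w, turn; simpl; reg. }
  assert (G0 : g 0 < 0).
  { unfold g; replace (w 0) with u by (unfold w, turn; pt_ring).
    rewrite Hu. replace (psub (pscale 1 u) u) with pzero by pt_ring.
    rewrite norm_pzero; lra. }
  assert (G1 : 0 < g 1).
  { unfold g; replace (w 1) with (pscale (-1) u) by (unfold w, turn; pt_ring).
    rewrite norm_opp, Hu.
    replace (psub (pscale 1 u) (pscale (-1) u)) with (pscale 2 u) by pt_ring.
    rewrite (norm_homog _ HN), Hu, Rabs_right by lra; lra. }
  destruct (IVT g 0 1 Cg ltac:(lra) G0 G1) as [t [Ht Gt]].
  assert (Ht' : 0 < t < 1).
  { destruct Ht as [[|] [|]]; subst; try lra. }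
  assert (Hn : 0 < N (w t)).
  { destruct (norm_nonneg _ HN (w t)) as [|Hz]; [assumption|].
    exfalso; apply (turn_neq0 e u t (norm1_neq0 u Hu) He), (norm_definite _ HN); auto. }
  exists (pscale (/ N (w t)) (w t)); repeat split.
  - rewrite (norm_homog _ HN), Rabs_right by (left; now apply Rinv_0_lt_compat).
    field; lra.
  - replace (psub u (pscale (/ N (w t)) (w t)))
      with (pscale (/ N (w t)) (psub (pscale (N (w t)) u) (w t)))
      by (apply pt_ext; simpl; field; lra).
    rewrite (norm_homog _ HN), Rabs_right by (left; now apply Rinv_0_lt_compat).
    unfold g in Gt; rewrite (Rminus_diag_uniq _ _ Gt); field; lra.
  - replace (det u (pscale (/ N (w t)) (w t))) with (det u (w t) / N (w t))
      by (unfold det; simpl; field; lra).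
    unfold w; rewrite det_turn.
    pose proof (sqnorm_pos u (norm1_neq0 u Hu)).
    replace (e * _) with ((e * e) * (t * (1 - t)) * (fst u * fst u + snd u * snd u) / N (turn e u t))
      by (fold w; field; lra).
    rewrite He; apply Rdiv_lt_0_compat; [apply Rmult_lt_0_compat; nra|exact Hn].
Qed.

Lemma URTC_system_apex a b x :
  (N (psub a x) = 1 /\ N (psub b x) = 1) <-> apex (psub a b) (psub x b).
Proof.
  unfold apex.
  replace (psub (psub a b) (psub x b)) with (psub a x) by pt_ring.
  rewrite (norm_psubC x b). tauto.
Qed.

Lemma no_long_segment_URTC : ~ long_segment_in_sphere -> URTC N.
Proof.
  intros NL a b Hab; set (u := psub a b) in *.
  destruct (apex_on_side u 1 Hab ltac:(lra)) as [y1 [A1 D1]].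
  destruct (apex_on_side u (-1) Hab ltac:(lra)) as [y2 [A2 D2]].
  assert (Shift : forall y, psub (padd b y) b = y) by (intro; pt_ring).
  exists (padd b y1), (padd b y2); split.
  { intro E. apply (f_equal (fun x => det u (psub x b))) in E.
    rewrite !Shift in E. lra. }
  intro x; rewrite URTC_system_apex; fold u; split.
  - intro Ax. replace x with (padd b (psub x b)) by pt_ring.
    destruct (Rle_or_lt 0 (det u (psub x b))).
    + left; f_equal; apply (apex_upper_unique u); auto; lra.
    + right; f_equal; apply (apex_lower_unique u); auto; lra.
  - intros [-> | ->]; now rewrite Shift.
Qed.

Lemma long_segment_not_URTC : long_segment_in_sphere -> ~ URTC N.
Proof.
  intros [c [d [Hc [Hd [Hcd S]]]]] U; unfold unit_sphere in *.
  set (l := N (psub d c)).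
  assert (Hl : l > 1) by (unfold l; now rewrite norm_psubC).
  assert (Hl' : 0 < / l < 1).
  { split; [apply Rinv_0_lt_compat; lra|].
    rewrite <- Rinv_1; apply Rinv_lt_contravar; lra. }
  set (u := pscale (/ l) (psub d c)).
  set (p := line c (psub d c)).
  assert (Hu : N (psub u pzero) = 1).
  { replace (psub u pzero) with u by (unfold u, pzero; pt_ring).
    unfold u; rewrite (norm_homog _ HN), Rabs_right by lra.
    fold l; field; lra. }
  destruct (U u pzero Hu) as [x1 [x2 [_ Hsol]]].
  assert (Sol : forall s, / l <= s <= 1 -> p s = x1 \/ p s = x2).
  { intros s Hs; apply Hsol; split.
    - replace (psub u (p s)) with (pscale (-1) (p (s - / l)))
        by (unfold p, u, line; apply pt_ext; simpl; field; lra).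
      rewrite norm_opp; apply S; exists (s - / l); split; [lra|reflexivity].
    - replace (psub pzero (p s)) with (pscale (-1) (p s)) by (unfold pzero; pt_ring).
      rewrite norm_opp; apply S; exists s; split; [lra|reflexivity]. }
  assert (Inj : forall s s', s <> s' -> p s <> p s').
  { intros s s' Hss E; apply Hss, (line_inj c (psub d c)); [|exact E].
    intros Z; unfold l in Hl; rewrite Z, norm_pzero in Hl; lra. }
  pose proof (Inj (/ l) ((/ l + 1) / 2) ltac:(lra)).
  pose proof (Inj (/ l) 1 ltac:(lra)).
  pose proof (Inj ((/ l + 1) / 2) 1 ltac:(lra)).
  destruct (Sol (/ l) ltac:(lra)), (Sol ((/ l + 1) / 2) ltac:(lra)), (Sol 1 ltac:(lra));
    congruence.
Qed.

End PlaneNorm.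

Theorem lemma1 (N : pt -> R) (HN : is_norm N) :
  ((~ URTC N) <->
    exists c d : pt, unit_sphere N c /\ unit_sphere N d /\ N (psub c d) > 1 /\
      (forall x, segment c d x -> unit_sphere N x))
  /\ (strictly_convex N -> URTC N).
Proof.
  fold (long_segment_in_sphere N).
  split; [split|].
  - intro NU. apply NNPP; intro NL. exact (NU (no_long_segment_URTC N HN NL)).
  - exact (long_segment_not_URTC N HN).
  - intro SC. apply (no_long_segment_URTC N HN).
    intros [c [d [_ [_ [Hcd S]]]]].
    apply (SC c d); [|exact S].
    intros ->. replace (psub d d) with pzero in Hcd by pt_ring.
    rewrite (norm_pzero N HN) in Hcd; lra.
Qed.
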